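(* Consider the dynamic setting: $K\ge2$, $\delta\in(0,1/K]$, $c,c_\eta>0$; $\mathbf z_t\in\Delta^{K-1}$, $|\widetilde f_t|\le c$, $\ell_t(\mathbf w)=-\widetilde f_t\mathbf w^\top\mathbf z_t$; $\widehat{\mathbf w}_1$ uniform and $\widehat{\mathbf w}_{t+1}=\arg\min_{\mathbf w\in\Delta^{K-1}}\{\eta_t\nabla\ell_t^\top\mathbf w+\mathrm{KL}(\mathbf w\|\widehat{\mathbf w}_t)\}$ with $\eta_t=\eta_0/\sqrt{1+c_\eta t}$; comparators $\mathbf w_1,\dots,\mathbf w_T$ and iterates $\widehat{\mathbf w}_1,\dots,\widehat{\mathbf w}_{T+1}$ all in $\Delta^{K-1}_\delta$. Let $V_T=\sum_{t=2}^T\|\mathbf w_t-\mathbf w_{t-1}\|_1$, $L_\delta=1+\log(1/\delta)$, $A_T:=\log(1/\delta)+L_\delta V_T$, $\eta_0=\sqrt{c_\eta A_T}/c$, and $R^{\mathrm{dyn}}_T=\sum_{t\le T}(\ell_t(\widehat{\mathbf w}_t)-\ell_t(\mathbf w_t))$. Then for any $\varepsilon>0$, $\frac1T R_T^{\mathrm{dyn}}\le\varepsilon$ holds whenever $$T\ge\frac{2}{\varepsilon^2}\left(c^2A_T+\sqrt{c^4A_T^2+\frac{\varepsilon^2c^2A_T}{c_\eta}}\right).$$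
   Context: $\Delta^{K-1}$ is the probability simplex; $\Delta^{K-1}_\delta=\{\mathbf w\in\Delta^{K-1}:w_k\ge\delta\ \forall k\}$; $\mathrm{KL}(\mathbf u\|\mathbf w)=\sum_k u_k\log(u_k/w_k)$. *)

From HB Require Import structures.
From mathcomp Require Import all_boot all_order all_algebra.
From mathcomp Require Import reals exp.
Set Implicit Arguments. Unset Strict Implicit. Unset Printing Implicit Defensive.
Import Order.TTheory GRing.Theory Num.Theory.
Local Open Scope ring_scope.

Section Defs.
Variables (R : realType) (K : nat).

Definition in_simplex (w : 'I_K -> R) : Prop :=
  (forall k, 0 <= w k) /\ \sum_(k < K) w k = 1.

Definition in_simplex_delta (delta : R) (w : 'I_K -> R) : Prop :=
  in_simplex w /\ (forall k, delta <= w k).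

Definition dotp (u v : 'I_K -> R) : R := \sum_(k < K) u k * v k.

(* KL(u || w) = sum_k u_k log(u_k / w_k)  (ln 0 = 0 gives 0 log 0 = 0) *)
Definition KL (u w : 'I_K -> R) : R := \sum_(k < K) u k * ln (u k / w k).

Definition loss (f : R) (z w : 'I_K -> R) : R := - (f * dotp w z).

Definition grad_loss (f : R) (z : 'I_K -> R) : 'I_K -> R := fun k => - (f * z k).

Definition uniform : 'I_K -> R := fun _ => (K%:R)^-1.

Definition is_md_step (eta : R) (g wprev w' : 'I_K -> R) : Prop :=
  in_simplex w' /\
  forall w, in_simplex w -> eta * dotp g w' + KL w' wprev <= eta * dotp g w + KL w wprev.

Definition path_length (T : nat) (w : nat -> 'I_K -> R) : R :=
  \sum_(2 <= t < T.+1) \sum_(k < K) `|w t k - w t.-1 k|.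

Definition Ldelta (delta : R) : R := 1 + ln (delta^-1).

Definition A_T (delta : R) (T : nat) (w : nat -> 'I_K -> R) : R :=
  ln (delta^-1) + Ldelta delta * path_length T w.

Definition eta0 (c ceta A : R) : R := Num.sqrt (ceta * A) / c.
Definition eta_t (c ceta A : R) (t : nat) : R := eta0 c ceta A / Num.sqrt (1 + ceta * t%:R).

Definition dyn_regret (T : nat) (f : nat -> R) (z wh w : nat -> 'I_K -> R) : R :=
  \sum_(1 <= t < T.+1) (loss (f t) (z t) (wh t) - loss (f t) (z t) (w t)).

End Defs.

From HB Require Import structures.
From mathcomp Require Import all_boot all_order all_algebra.
From mathcomp Require Import reals exp.
From mathcomp Require Import ring lra.
Import Order.TTheory GRing.Theory Num.Theory.
Set Implicit Arguments. Unset Strict Implicit. Unset Printing Implicit Defensive.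
Local Open Scope ring_scope.

(* Each mirror-descent step satisfies the first-order optimality condition of
   its KL-regularised problem, and the linear gain of the step against
   KL(wh_{t+1} || wh_t) is at most eta_t^2 c^2 / 4 (bound the KL terms below by
   squared Hellinger distances and the centred gradient by c/2).  Hence the
   dynamic regret at round t is at most
     eta_t c^2 / 4 + eta_t^-1 <w_t, ln wh_{t+1} - ln wh_t>.
   Summing by parts with the nondecreasing weights 1 / eta_t and
   ln wh_t in [ln delta, 0] bounds the second sum by
   ln(1/delta) (1 + V_T) / eta_T <= A_T / eta_T.  For the schedule
   eta_t = eta_0 / sqrt(1 + c_eta t) the total is at most
   (3/2) sqrt(c^2 A_T (T + 1/c_eta)), and the hypothesis on T is exactly the
   quadratic condition 4 c^2 A_T (T + 1/c_eta) <= eps^2 T^2. *)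

Lemma ln_le_subr1 (R : realType) (y : R) : 0 < y -> ln y <= y - 1.
Proof. by move=> y0; have := @le_ln1Dx R (y - 1); rewrite addrCA subrr addr0; apply; lra. Qed.

Lemma ge0_of_small_perturbation (R : realFieldType) (D C : R) :
  (forall s, 0 < s <= 1 -> 0 <= s * D + s ^+ 2 * C) -> 0 <= D.
Proof.
move=> H; rewrite leNgt; apply/negP => D0.
have C0 := normr_ge0 C; have den0 : 0 < `|C| - D by lra.
pose s := - D / (`|C| - D).
have s0 : 0 < s by rewrite divr_gt0 // oppr_gt0.
have s1 : s <= 1 by rewrite ler_pdivrMr // mul1r; lra.
have sC : s * C <= s * `|C| by rewrite ler_pM2l // ler_norm.
have eD : D + s * `|C| = - D ^+ 2 / (`|C| - D) by rewrite /s; field; rewrite gt_eqF.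
have : D + s * `|C| < 0 by rewrite eD mulNr oppr_lt0 divr_gt0 // exprn_even_gt0 //= (lt_eqF D0).
have := H s; rewrite s0 s1 => /(_ isT).
nra.
Qed.

Lemma sqr_sub_le_ln_bregman (R : realType) (a b : R) : 0 < a -> 0 < b ->
  (a - b) ^+ 2 <= a ^+ 2 * ln (a ^+ 2 / b ^+ 2) - a ^+ 2 + b ^+ 2.
Proof.
move=> a0 b0; rewrite -expr_div_n lnXn ?divr_gt0 // mulr2n.
have : ln (b / a) <= b / a - 1 by apply: ln_le_subr1; rewrite divr_gt0.
rewrite -[b / a]invf_div lnV ?posrE ?divr_gt0 // invf_div => h.
have := ler_wpM2l (ltW (exprn_gt0 2 a0)) h.
have -> : a ^+ 2 * (b / a - 1) = a * b - a ^+ 2 by field; rewrite gt_eqF.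
nra.
Qed.

Lemma gain_sub_sqr_le (R : realFieldType) (x m a b : R) : `|x| <= m ->
  x * (b ^+ 2 - a ^+ 2) - (a - b) ^+ 2 <= m ^+ 2 / 2 * (a ^+ 2 + b ^+ 2).
Proof.
rewrite ler_norml => /andP[xm mx].
have amgm : 0 <= (x * (a + b) / 2 - (b - a)) ^+ 2 := sqr_ge0 _.
have xx : 0 <= (m - x) * (m + x) * (a + b) ^+ 2.
  by apply: mulr_ge0; [apply: mulr_ge0; lra | exact: sqr_ge0].
have ab : 0 <= m ^+ 2 * (a - b) ^+ 2 by rewrite mulr_ge0 ?sqr_ge0.
nra.
Qed.

Section Simplex.
Variables (R : realType) (K : nat).
Implicit Types (u v p q w L : 'I_K -> R).

Lemma simplex_le1 w k : in_simplex w -> w k <= 1.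
Proof. by case=> w0 <-; rewrite (bigD1 k) //= lerDl sumr_ge0. Qed.

Lemma dotpC u v : dotp u v = dotp v u.
Proof. by apply: eq_bigr => k _; rewrite mulrC. Qed.

Lemma dotpBr u v v' : dotp u (fun k => v k - v' k) = dotp u v - dotp u v'.
Proof. by rewrite /dotp -sumrB; apply: eq_bigr => k _; rewrite mulrBr. Qed.

Lemma dotp_lerp p u (s : R) L :
  dotp (fun k => p k + s * (u k - p k)) L = dotp p L + s * (dotp u L - dotp p L).
Proof. by rewrite /dotp -sumrB mulr_sumr -big_split; apply: eq_bigr => k _ /=; ring. Qed.

Lemma simplex_lerp p u (s : R) : in_simplex p -> in_simplex u -> 0 <= s <= 1 ->
  in_simplex (fun k => p k + s * (u k - p k)).
Proof.
move=> [p0 p1] [u0 u1] /andP[s0 s1]; split=> [k|].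
  have := p0 k; have := u0 k => uk pk.
  have : 0 <= s * u k + (1 - s) * p k by rewrite addr_ge0 // mulr_ge0 // subr_ge0.
  lra.
by rewrite big_split /= -mulr_sumr sumrB p1 u1 subrr mulr0 addr0.
Qed.

Lemma lossE (f : R) z w : loss f z w = dotp (grad_loss f z) w.
Proof. by rewrite /loss /dotp /grad_loss mulr_sumr -sumrN; apply: eq_bigr => k _; ring. Qed.

Lemma dotp_ge_oppr w L (l : R) : in_simplex w -> (forall k, - l <= L k) -> - l <= dotp w L.
Proof.
move=> [w0 w1] Ll; rewrite -[- l]mul1r -w1 mulr_suml.
by apply: ler_sum => k _; rewrite ler_wpM2l.
Qed.

Lemma dotp_le0 w L : in_simplex w -> (forall k, L k <= 0) -> dotp w L <= 0.
Proof. by move=> [w0 _] L0; apply: sumr_le0 => k _; rewrite mulr_ge0_le0. Qed.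

Lemma dotp_subl_le u v L (l : R) : (forall k, `|L k| <= l) ->
  dotp u L - dotp v L <= l * \sum_(k < K) `|v k - u k|.
Proof.
move=> Ll; rewrite /dotp -sumrB mulr_sumr; apply: ler_sum => k _.
rewrite -mulrBl distrC mulrC; apply: le_trans (ler_norm _) _.
by rewrite normrM ler_wpM2r.
Qed.

Lemma KL_le_chi2 w p : in_simplex w -> in_simplex p -> (forall k, 0 < p k) ->
  KL w p <= \sum_(k < K) (w k - p k) ^+ 2 / p k.
Proof.
move=> [w0 w1] [_ p1] p0.
have chi2E : \sum_(k < K) w k * (w k / p k - 1) =
    \sum_(k < K) (w k - p k) ^+ 2 / p k + (\sum_(k < K) w k - \sum_(k < K) p k).
  by rewrite -sumrB -big_split; apply: eq_bigr => k _ /=; field; rewrite gt_eqF.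
rewrite w1 p1 subrr addr0 in chi2E.
rewrite -chi2E; apply: ler_sum => k _.
have [->|wk0] := eqVneq (w k) 0; first by rewrite !mul0r.
by rewrite ler_wpM2l // ln_le_subr1 // divr_gt0 // lt_neqAle eq_sym wk0 w0.
Qed.

Lemma KL_change_ref w p q : (forall k, 0 <= w k) -> (forall k, 0 < p k) -> (forall k, 0 < q k) ->
  KL w q = KL w p + dotp w (fun k => ln (p k / q k)).
Proof.
move=> w0 p0 q0; rewrite /KL /dotp -big_split; apply: eq_bigr => k _ /=.
have [->|wk0] := eqVneq (w k) 0; first by rewrite !mul0r addr0.
have wk : 0 < w k by rewrite lt_neqAle eq_sym wk0 w0.
rewrite -mulrDr -lnM ?posrE ?divr_gt0 //; congr (_ * ln _).
by field; rewrite !gt_eqF.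
Qed.

Lemma KL_simplexE p q : in_simplex p -> in_simplex q ->
  KL p q = \sum_(k < K) (p k * ln (p k / q k) - p k + q k).
Proof. by move=> [_ p1] [_ q1]; rewrite big_split sumrB /= p1 q1 subrK. Qed.

Lemma path_lengthS n (w : nat -> 'I_K -> R) :
  path_length n.+2 w = path_length n.+1 w + \sum_(k < K) `|w n.+2 k - w n.+1 k|.
Proof. by rewrite /path_length big_nat_recr. Qed.

Lemma path_length_ge0 T (w : nat -> 'I_K -> R) : 0 <= path_length T w.
Proof. by apply: sumr_ge0 => t _; apply: sumr_ge0. Qed.

Lemma A_T_ge (delta : R) T (w : nat -> 'I_K -> R) :
  ln delta^-1 * (1 + path_length T w) <= A_T delta T w.
Proof. by have := path_length_ge0 T w; rewrite /A_T /Ldelta; lra. Qed.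

Lemma A_T_gt0 (delta : R) T (w : nat -> 'I_K -> R) :
  0 < delta < 1 -> 0 < A_T delta T w.
Proof.
move=> /andP[d0 d1]; apply: lt_le_trans (A_T_ge _ _ _).
by rewrite mulr_gt0 ?ln_gt0 ?invf_gt1 // ltr_wpDr ?path_length_ge0.
Qed.

End Simplex.

Section MirrorDescent.
Variables (R : realType) (K : nat).
Implicit Types (u p q z g : 'I_K -> R).

Lemma md_step_optimality (eta : R) g q p u :
  (forall k, 0 < q k) -> (forall k, 0 < p k) -> is_md_step eta g q p -> in_simplex u ->
  eta * dotp g p + KL p q <= eta * dotp g u + dotp u (fun k => ln (p k / q k)).
Proof.
move=> q0 p0 [ps opt] us.
set Lpq := fun k => ln (p k / q k).
have KLpq : KL p q = dotp p Lpq by [].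
rewrite KLpq.
(* Perturb p towards u: along the segment KL(. || p) grows only quadratically. *)
pose C := \sum_(k < K) (u k - p k) ^+ 2 / p k.
suff : 0 <= eta * (dotp g u - dotp g p) + (dotp u Lpq - dotp p Lpq) by lra.
apply: (@ge0_of_small_perturbation _ _ C) => s /andP[s0 s1].
pose ws k := p k + s * (u k - p k).
have wsS : in_simplex ws by apply: (simplex_lerp ps us); rewrite (ltW s0) s1.
have eG : dotp g ws = dotp g p + s * (dotp g u - dotp g p).
  by rewrite !(dotpC g) dotp_lerp.
have eL : dotp ws Lpq = dotp p Lpq + s * (dotp u Lpq - dotp p Lpq) := dotp_lerp _ _ _ _.
have eK : KL ws q = KL ws p + dotp ws Lpq := KL_change_ref wsS.1 p0 q0.
have hK : KL ws p <= s ^+ 2 * C.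
  have -> : s ^+ 2 * C = \sum_(k < K) (ws k - p k) ^+ 2 / p k.
    by rewrite mulr_sumr; apply: eq_bigr => k _; rewrite /ws; ring.
  exact: KL_le_chi2.
have := opt _ wsS; rewrite eG eK eL KLpq.
lra.
Qed.

Lemma dotp_sub_KL_le (eta c f : R) z p q :
  0 <= eta -> `|f| <= c -> in_simplex z -> in_simplex p -> in_simplex q ->
  (forall k, 0 < p k) -> (forall k, 0 < q k) ->
  eta * dotp (grad_loss f z) q - eta * dotp (grad_loss f z) p - KL p q
    <= eta ^+ 2 * c ^+ 2 / 4.
Proof.
move=> eta0 fc zs ps qs p0 q0.
(* Centring the gradient -f z at -f/2 bounds it by c/2 coordinatewise. *)
pose x k := eta * (f * (2^-1 - z k)).
have xm k : `|x k| <= eta * (c / 2).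
  have zk := zs.1 k; have zk1 := simplex_le1 k zs.
  have h : `|2^-1 - z k| <= 2^-1 by rewrite ler_norml; apply/andP; split; lra.
  by rewrite /x !normrM (ger0_norm eta0) ler_wpM2l // ler_pM.
have shift : eta * dotp (grad_loss f z) q - eta * dotp (grad_loss f z) p =
    \sum_(k < K) x k * (q k - p k).
  have : \sum_(k < K) x k * (q k - p k) = eta * dotp (grad_loss f z) (fun k => q k - p k)
      + eta * f / 2 * \sum_(k < K) (q k - p k).
    by rewrite !mulr_sumr -big_split; apply: eq_bigr => k _ /=; rewrite /x /grad_loss; ring.
  by rewrite sumrB qs.2 ps.2 subrr mulr0 addr0 dotpBr mulrBr => ->.
rewrite shift KL_simplexE // -sumrB.
apply: le_trans (_ : _ <= \sum_(k < K) (eta * (c / 2)) ^+ 2 / 2 * (p k + q k)) _.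
  apply: ler_sum => k _.
  rewrite -[p k](sqr_sqrtr (ltW (p0 k))) -[q k](sqr_sqrtr (ltW (q0 k))).
  apply: le_trans (gain_sub_sqr_le _ _ (xm k)); rewrite lerD2l lerN2.
  by apply: sqr_sub_le_ln_bregman; rewrite sqrtr_gt0.
rewrite -mulr_sumr big_split /= ps.2 qs.2.
lra.
Qed.

Lemma md_step_regret (eta c f : R) z q p u :
  0 < eta -> `|f| <= c -> in_simplex z -> in_simplex q -> in_simplex u ->
  (forall k, 0 < q k) -> (forall k, 0 < p k) -> is_md_step eta (grad_loss f z) q p ->
  loss f z q - loss f z u
    <= c ^+ 2 / 4 * eta + eta^-1 * dotp u (fun k => ln (p k) - ln (q k)).
Proof.
move=> eta0 fc zs qs us q0 p0 md.
have opt := md_step_optimality q0 p0 md us.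
have gain := dotp_sub_KL_le (ltW eta0) fc zs md.1 qs p0 q0.
have -> : dotp u (fun k => ln (p k) - ln (q k)) = dotp u (fun k => ln (p k / q k)).
  by apply: eq_bigr => k _; rewrite ln_div ?posrE.
rewrite !lossE -(ler_pM2l eta0) [X in _ <= X]mulrDr mulVKf ?gt_eqF //.
lra.
Qed.

Lemma abel_sum_le (T : nat) (a : nat -> R) (W L : nat -> 'I_K -> R) (l : R) :
  0 <= l -> (forall t, 0 <= a t) -> (forall t, (1 <= t < T)%N -> a t <= a t.+1) ->
  (forall t, (1 <= t <= T)%N -> in_simplex (W t)) ->
  (forall t k, (1 <= t <= T.+1)%N -> - l <= L t k <= 0) ->
  \sum_(1 <= t < T.+1) a t * dotp (W t) (fun k => L t.+1 k - L t k)
    <= a T * (l * (1 + path_length T W)).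
Proof.
move=> l0 a0 amono Ws Lb.
have V0 n := path_length_ge0 n W.
have [->|T0] := posnP T.
  by rewrite big_geq // mulr_ge0 // mulr_ge0 // addr_ge0.
suff inv : forall n, (0 < n <= T)%N ->
    \sum_(1 <= t < n.+1) a t * dotp (W t) (fun k => L t.+1 k - L t k)
      <= a n * (dotp (W n) (L n.+1) + l * (1 + path_length n W)).
  apply: le_trans (inv T _) _; first by rewrite T0 leqnn.
  rewrite ler_wpM2l // gerDr.
  by apply: dotp_le0 => [|k]; [apply: Ws; rewrite T0 leqnn | case/andP: (Lb T.+1 k (leqnn _))].
case=> // n; elim: n => [|n IH] /andP[_ nT].
  rewrite big_nat1 /path_length big_geq // addr0 mulr1 dotpBr ler_wpM2l // lerD2l.
  by rewrite lerNl; apply: dotp_ge_oppr => [|k]; [apply: Ws; rewrite nT | case/andP: (Lb 1%N k isT)].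
have {}IH := IH (ltnW nT).
rewrite big_nat_recr //= path_lengthS.
set V := path_length n.+1 W in IH *; set D := \sum_(k < K) _.
have Ln k : `|L n.+2 k| <= l.
  by have /andP[? ?] := Lb n.+2 k (ltnW nT); rewrite ler_norml; apply/andP; split; lra.
have hx := dotp_subl_le (W n.+1) (W n.+2) Ln.
have hy : - l <= dotp (W n.+2) (L n.+2).
  by apply: dotp_ge_oppr => [|k]; [apply: Ws; rewrite nT | case/andP: (Lb n.+2 k (ltnW nT))].
have a1 := a0 n.+1; have a12 : a n.+1 <= a n.+2 by apply: amono; rewrite nT.
have D0 : 0 <= D by apply: sumr_ge0.
have h1 := ler_wpM2l a1 hx; rewrite -/D in h1.
have h2 : 0 <= (a n.+2 - a n.+1) * (dotp (W n.+2) (L n.+2) + l).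
  by rewrite mulr_ge0 // ?subr_ge0; lra.
have h3 : 0 <= (a n.+2 - a n.+1) * l * (V + D).
  by apply: mulr_ge0; [apply: mulr_ge0; rewrite ?subr_ge0 | exact: addr_ge0 (V0 _) D0].
rewrite dotpBr.
lra.
Qed.

Lemma md_dynamic_regret (delta c : R) (T : nat) (eta : nat -> R)
    (z : nat -> 'I_K -> R) (f : nat -> R) (wh w : nat -> 'I_K -> R) :
  0 < delta -> delta <= 1 ->
  (forall t, 0 < eta t) -> (forall t, (1 <= t < T)%N -> eta t.+1 <= eta t) ->
  (forall t, (1 <= t <= T)%N -> in_simplex (z t)) ->
  (forall t, (1 <= t <= T)%N -> `|f t| <= c) ->
  (forall t, (1 <= t <= T)%N ->
     is_md_step (eta t) (grad_loss (f t) (z t)) (wh t) (wh t.+1)) ->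
  (forall t, (1 <= t <= T)%N -> in_simplex (w t)) ->
  (forall t, (1 <= t <= T.+1)%N -> in_simplex_delta delta (wh t)) ->
  dyn_regret T f z wh w <=
    c ^+ 2 / 4 * \sum_(1 <= t < T.+1) eta t + ln delta^-1 * (1 + path_length T w) / eta T.
Proof.
move=> d0 d1 eta0 etaS zs fc md ws whs.
have whpos t k : (1 <= t <= T.+1)%N -> 0 < wh t k.
  by move=> /whs[_ /(_ k)]; apply: lt_le_trans.
have lnwh t k : (1 <= t <= T.+1)%N -> - ln delta^-1 <= ln (wh t k) <= 0.
  move=> ht; have [whS /(_ k) dwh] := whs t ht.
  by rewrite lnV ?posrE // opprK ler_ln ?posrE ?whpos // dwh ln_le0 // simplex_le1.
apply: le_trans (_ : _ <= \sum_(1 <= t < T.+1) (c ^+ 2 / 4 * eta t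
    + (eta t)^-1 * dotp (w t) (fun k => ln (wh t.+1 k) - ln (wh t k)))) _.
  apply: ler_sum_nat => t /andP[t1 tT]; rewrite ltnS in tT.
  have ht : (1 <= t <= T)%N by rewrite t1.
  have ht1 : (1 <= t <= T.+1)%N by rewrite t1 leqW.
  have ht2 : (1 <= t.+1 <= T.+1)%N by rewrite !ltnS tT.
  apply: md_step_regret (eta0 t) (fc t ht) (zs t ht) (whs t ht1).1 (ws t ht) _ _ (md t ht).
    by move=> k; apply: whpos.
  by move=> k; apply: whpos.
rewrite big_split /= -mulr_sumr (mulrC _ (eta T)^-1) lerD2l.
apply: (abel_sum_le (a := fun t => (eta t)^-1) (L := fun t k => ln (wh t k)))
  => [|t|t /andP[t1 tT]|t /ws|t k /lnwh] //.
- by rewrite ln_ge0 // invf_ge1.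
- by rewrite invr_ge0 ltW.
- by rewrite lef_pV2 ?posrE // etaS // t1.
Qed.

End MirrorDescent.

Lemma sum_inv_sqrt_le (R : rcfType) (ce : R) n : 0 < ce ->
  \sum_(1 <= t < n.+1) (Num.sqrt (1 + ce * t%:R))^-1
    <= 2 * (Num.sqrt (1 + ce * n%:R) - 1) / ce.
Proof.
move=> ce0; elim: n => [|n IH].
  by rewrite big_geq // mulr0 addr0 sqrtr1 subrr mulr0 mul0r.
rewrite big_nat_recr //=.
set x := Num.sqrt (1 + ce * n.+1%:R); set y := Num.sqrt (1 + ce * n%:R) in IH *.
have n0 : 0 <= n%:R :> R := ler0n _ _.
have y0 : 0 <= y := sqrtr_ge0 _.
have x0 : 0 < x by rewrite sqrtr_gt0 -natr1; nra.
have ex : x ^+ 2 = y ^+ 2 + ce by rewrite !sqr_sqrtr -?natr1; [ring | nra | nra].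
have step : x^-1 <= 2 * (x - y) / ce.
  rewrite -(ler_pM2r (mulr_gt0 x0 ce0)) mulKf ?gt_eqF //.
  have -> : 2 * (x - y) / ce * (x * ce) = 2 * x * (x - y) by field; rewrite gt_eqF.
  by have := sqr_ge0 (x - y); nra.
have -> : 2 * (x - 1) / ce = 2 * (y - 1) / ce + 2 * (x - y) / ce by field; rewrite gt_eqF.
exact: lerD.
Qed.

Lemma quadratic_root_le (R : rcfType) (a b g x : R) : 0 < a -> 0 <= g ->
  2 / a * (b + Num.sqrt (b ^+ 2 + a * g)) <= x -> 4 * (b * x + g) <= a * x ^+ 2.
Proof.
move=> a0 g0 hx.
have D0 : 0 <= b ^+ 2 + a * g := addr_ge0 (sqr_ge0 b) (mulr_ge0 (ltW a0) g0).
set r := Num.sqrt _ in hx; have r0 : 0 <= r := sqrtr_ge0 _.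
have er : r ^+ 2 = b ^+ 2 + a * g by rewrite sqr_sqrtr.
have hr : r <= a * x / 2 - b.
  have := ler_wpM2l (ltW a0) hx.
  by rewrite mulrA mulrCA divff ?gt_eqF // mulr1 => h; lra.
have hsq : a * (4 * (b * x + g)) <= a * (a * x ^+ 2) by nra.
by rewrite ler_pM2l in hsq.
Qed.

Section StepSizeSchedule.
Variables (R : realType) (c ceta A : R).
Hypotheses (c0 : 0 < c) (ce0 : 0 < ceta) (A0 : 0 < A).

Lemma sqrt_1Dceta_gt0 (t : nat) : 0 < Num.sqrt (1 + ceta * t%:R).
Proof. by rewrite sqrtr_gt0 ltr_pwDl // mulr_ge0 // ltW. Qed.

Lemma eta_t_gt0 t : 0 < eta_t c ceta A t.
Proof. by rewrite !divr_gt0 ?sqrt_1Dceta_gt0 // sqrtr_gt0 mulr_gt0. Qed.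

Lemma eta_tS_le t : eta_t c ceta A t.+1 <= eta_t c ceta A t.
Proof.
rewrite ler_pM2l ?divr_gt0 ?sqrtr_gt0 ?mulr_gt0 // lef_pV2 ?posrE ?sqrt_1Dceta_gt0 //.
by rewrite ler_sqrt ?lerD2l ?ler_pM2l ?ler_nat // ltW // ltr_pwDl // mulr_ge0 ?ltW.
Qed.

Lemma eta_t_regret_le T :
  c ^+ 2 / 4 * \sum_(1 <= t < T.+1) eta_t c ceta A t + A / eta_t c ceta A T
    <= 3 / 2 * Num.sqrt (c ^+ 2 * A * (T%:R + ceta^-1)).
Proof.
set s := Num.sqrt (ceta * A); set B := Num.sqrt (1 + ceta * T%:R).
have s0 : 0 < s by rewrite sqrtr_gt0 mulr_gt0.
have B0 : 0 < B := sqrt_1Dceta_gt0 T.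
have es : s ^+ 2 = ceta * A by rewrite sqr_sqrtr // ltW // mulr_gt0.
have eB : B ^+ 2 = 1 + ceta * T%:R by rewrite sqr_sqrtr // addr_ge0 // mulr_ge0 // ltW.
pose X := c * s / ceta.
have X0 : 0 < X by rewrite /X divr_gt0 // mulr_gt0.
have hsum : c ^+ 2 / 4 * \sum_(1 <= t < T.+1) eta_t c ceta A t <= X * (B - 1) / 2.
  have -> : X * (B - 1) / 2 = c ^+ 2 / 4 * (eta0 c ceta A * (2 * (B - 1) / ceta)).
    by rewrite /eta0 -/s /X; field; rewrite !gt_eqF.
  rewrite /eta_t -mulr_sumr ler_wpM2l ?divr_ge0 ?sqr_ge0 // ler_wpM2l ?sum_inv_sqrt_le //.
  by rewrite /eta0 divr_ge0 ?sqrtr_ge0 ?ltW.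
have hlast : A / eta_t c ceta A T = X * B.
  rewrite /eta_t /eta0 -/s -/B /X -[A](mulKf (lt0r_neq0 ce0)) -es.
  by field; rewrite !gt_eqF.
have hsqrt : Num.sqrt (c ^+ 2 * A * (T%:R + ceta^-1)) = X * B.
  rewrite -(ger0_norm (ltW (mulr_gt0 X0 B0))) -sqrtr_sqr; congr Num.sqrt.
  by rewrite /X !exprMn es eB; field; rewrite gt_eqF.
rewrite hlast hsqrt.
lra.
Qed.

End StepSizeSchedule.

Theorem corollaryB3 (R : realType) (K : nat) (delta c ceta : R) (T : nat)
  (z : nat -> 'I_K -> R) (f : nat -> R) (wh w : nat -> 'I_K -> R) (eps : R) :
  (2 <= K)%N -> 0 < delta -> delta <= (K%:R)^-1 -> 0 < c -> 0 < ceta ->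
  (forall t, (1 <= t <= T)%N -> in_simplex (z t)) ->
  (forall t, (1 <= t <= T)%N -> `|f t| <= c) ->
  wh 1%N = @uniform R K ->
  (forall t, (1 <= t <= T)%N ->
     is_md_step (eta_t c ceta (A_T delta T w) t) (grad_loss (f t) (z t)) (wh t) (wh t.+1)) ->
  (forall t, (1 <= t <= T)%N -> in_simplex_delta delta (w t)) ->
  (forall t, (1 <= t <= T.+1)%N -> in_simplex_delta delta (wh t)) ->
  0 < eps ->
  2 / eps ^+ 2 * (c ^+ 2 * A_T delta T w
      + Num.sqrt (c ^+ 4 * (A_T delta T w) ^+ 2
                  + eps ^+ 2 * c ^+ 2 * A_T delta T w / ceta)) <= T%:R ->
  dyn_regret T f z wh w / T%:R <= eps.
Proof.
move=> K2 d0 dK c0 ce0 zs fc _ md ws whs e0 HT.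
have [->|T0] := posnP T; first by rewrite invr0 mulr0 ltW.
set A := A_T delta T w in md HT *.
have K1 : 1 < K%:R :> R by rewrite ltr1n.
have d1 : delta < 1 by apply: le_lt_trans dK _; rewrite invf_lt1 // (lt_trans ltr01 K1).
have A0 : 0 < A by apply: A_T_gt0; rewrite d0 d1.
have eta0 := eta_t_gt0 c0 ce0 A0.
rewrite ler_pdivrMr ?ltr0n //.
apply: le_trans (md_dynamic_regret d0 (ltW d1) eta0 _ zs fc md (fun t ht => (ws t ht).1) whs) _.
  by move=> t _; apply: eta_tS_le.
apply: le_trans (_ : _ <= c ^+ 2 / 4 * \sum_(1 <= t < T.+1) eta_t c ceta A t
                          + A / eta_t c ceta A T) _.
  by rewrite lerD2l ler_pM2r ?invr_gt0 //; apply: A_T_ge.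
apply: le_trans (eta_t_regret_le c0 ce0 A0 T) _.
have g0 : 0 <= c ^+ 2 * A / ceta by rewrite divr_ge0 ?mulr_ge0 ?sqr_ge0 // ltW.
have := quadratic_root_le (b := c ^+ 2 * A) (exprn_gt0 2 e0) g0.
rewrite (_ : (c ^+ 2 * A) ^+ 2 + eps ^+ 2 * (c ^+ 2 * A / ceta)
           = c ^+ 4 * A ^+ 2 + eps ^+ 2 * c ^+ 2 * A / ceta); last by ring.
move=> /(_ _ HT) quad.
have epsT : 0 <= eps * T%:R := mulr_ge0 (ltW e0) (ler0n _ _).
have : Num.sqrt (c ^+ 2 * A * (T%:R + ceta^-1)) <= eps * T%:R / 2.
  rewrite -(ger0_norm (divr_ge0 epsT (ler0n _ 2))) -sqrtr_sqr ler_sqrt ?sqr_ge0 //.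
  lra.
lra.
Qed.
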